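(* Suppose that $\xi(0)\ge4d$. Then for every $t\ge0$, \[P^\xi\Big(N(0,t)<\tfrac12e^{(\xi(0)-2d)t}\Big)\le\frac{15}{16}.\]
   Context: $(\xi(z))_{z\in\mathbb{Z}^d}$ is a fixed non-negative potential. $P^\xi$ is the law of the branching random walk started with a single particle at the origin: each particle performs a continuous-time simple symmetric random walk on $\mathbb{Z}^d$ (jumping to each of its $2d$ neighbours at rate $1$), and a particle at site $z$ splits into two particles at rate $\xi(z)$, the offspring behaving independently in the same way. $N(z,t)$ denotes the number of particles at site $z$ at time $t$. *)

(* Law of the branching random walk (BRW) on Z^d
   described as the (minimal) continuous-time Markov chain on particle
   configurations, via the jump-chain / backward integral-equation expansion. *)
From Stdlib Require Import Reals Lra ZArith List.
From Coquelicot Require Import Coquelicot.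
Import ListNotations.
Open Scope R_scope.

Definition site := list Z.
Definition origin (d : nat) : site := repeat 0%Z d.

Fixpoint addk (p : site) (k : nat) (v : Z) : site :=
  match p, k with
  | nil, _ => nil
  | a :: p', O => (a + v)%Z :: p'
  | a :: p', S k' => a :: addk p' k' v
  end.

(* configuration = list of positions of the (labelled) particles *)
Definition config := list site.

Fixpoint replace_nth (x : config) (i : nat) (b : site) : config :=
  match x, i with
  | nil, _ => nil
  | _ :: x', O => b :: x'
  | a :: x', S i' => a :: replace_nth x' i' b
  end.

(* All possible transitions out of configuration x, with their rates:
   particle i at p jumps to each of its 2d neighbours at rate 1, and
   splits into two particles (a new particle is added at p) at rate xi p. *)
Definition moves (d : nat) (xi : site -> R) (x : config) : list (R * config) :=
  flat_map (fun i =>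
    let p := nth i x nil in
    (xi p, x ++ [p]) ::
    flat_map (fun k => [(1, replace_nth x i (addk p k 1%Z));
                        (1, replace_nth x i (addk p k (-1)%Z))]) (seq 0 d))
  (seq 0 (length x)).

Definition qrate (d : nat) (xi : site -> R) (x : config) : R :=
  fold_right Rplus 0 (map fst (moves d xi x)).

(* jprob n t x = probability that the chain started at x has made exactly
   n jumps by time t and its state at time t satisfies E. *)
Fixpoint jprob (d : nat) (xi : site -> R) (E : config -> bool) (n : nat)
  (t : R) (x : config) {struct n} : R :=
  match n with
  | O => if E x then exp (- qrate d xi x * t) else 0
  | S m => RInt (fun s => exp (- qrate d xi x * s) *
             fold_right Rplus 0
               (map (fun rz => fst rz * jprob d xi E m (t - s) (snd rz))
                    (moves d xi x))) 0 t
  end.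

Definition brw_prob (d : nat) (xi : site -> R) (E : config -> bool) (t : R) : R :=
  Series (fun n => jprob d xi E n t [origin d]).

Definition Ncount (z : site) (x : config) : nat :=
  count_occ (list_eq_dec Z.eq_dec) x z.

Definition Rltb (a b : R) : bool := if Rlt_dec a b then true else false.

From Stdlib Require Import Reals Lra Lia ZArith List.
From Coquelicot Require Import Coquelicot.
Import ListNotations.
Open Scope R_scope.

(* Only the number n of particles at the origin matters: each of them branches
   at rate lam = xi(0) and leaves at rate mu = 2d, while moves elsewhere can only
   increase n.  Hence every test function w(t, n) that is nonincreasing in n and
   solves the backward equation of the linear birth-death process (lam, mu)
   dominates the first-jump expansion of the branching random walk, so that
   P(N(0,t) < m/2) <= w(t, 1) as soon as w(0, .) dominates 1{n < m/2}, where
   m = exp ((lam - mu) t).  The test functions K E_n[s^Z_t (1 + c Z_t)] are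
   explicit by Kendall's formula; with s = m/(m+1), c = 1/m (or s = 0 when
   m <= 2), w(t, 1) is a rational function of m and lam, mu, at most 15/16
   when lam >= 2 mu. *)

Local Notation sumR l := (fold_right Rplus 0 l).
Local Notation site_eq_dec := (list_eq_dec Z.eq_dec).

Lemma sumR_app (l1 l2 : list R) : sumR (l1 ++ l2) = sumR l1 + sumR l2.
Proof. induction l1 as [|a l IH]; simpl; [lra | rewrite IH; lra]. Qed.

Lemma sumR_map_flat_map {A B : Type} (f : B -> R) (g : A -> list B) (l : list A) :
  sumR (map f (flat_map g l)) = sumR (map (fun a => sumR (map f (g a))) l).
Proof.
  induction l as [|a l IH]; simpl; [reflexivity|].
  now rewrite map_app, sumR_app, IH.
Qed.

Lemma sumR_map_le {A : Type} (f g : A -> R) (l : list A) :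
  (forall a, In a l -> f a <= g a) -> sumR (map f l) <= sumR (map g l).
Proof.
  induction l as [|a l IH]; simpl; intros Hfg; [lra|].
  apply Rplus_le_compat; auto.
Qed.

Lemma sumR_map_const {A : Type} (c : R) (l : list A) :
  sumR (map (fun _ => c) l) = INR (length l) * c.
Proof.
  induction l as [|a l IH]; cbn [map fold_right length]; [simpl; lra|].
  rewrite S_INR, IH; lra.
Qed.

Lemma sumR_map_plus {A : Type} (f g : A -> R) (l : list A) :
  sumR (map (fun a => f a + g a) l) = sumR (map f l) + sumR (map g l).
Proof. induction l as [|a l IH]; simpl; [lra | rewrite IH; lra]. Qed.

Lemma sumR_map_seq_nth {A : Type} (f : A -> R) (a0 : A) (l : list A) :
  sumR (map (fun i => f (nth i l a0)) (seq 0 (length l))) = sumR (map f l).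
Proof.
  induction l as [|a l IH]; simpl; [reflexivity|].
  rewrite <- seq_shift, map_map. simpl. now rewrite IH.
Qed.

Lemma continuous_sumR_map {A : Type} (f : A -> R -> R) (l : list A) (v : R) :
  (forall a, In a l -> continuous (f a) v) ->
  continuous (fun u => sumR (map (fun a => f a u) l)) v.
Proof.
  induction l as [|a l IH]; simpl; intros Hf; [apply continuous_const|].
  apply (continuous_plus (f a)); auto.
Qed.

(** * Moves of the branching random walk *)

Lemma Ncount_cons (o a : site) (x : config) :
  Ncount o (a :: x) = (Ncount o x + if site_eq_dec a o then 1 else 0)%nat.
Proof.
  unfold Ncount. destruct (site_eq_dec a o) as [e|e].
  - rewrite (count_occ_cons_eq _ _ e). lia.
  - rewrite (count_occ_cons_neq _ _ e). lia.
Qed.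

Lemma Ncount_snoc (o p : site) (x : config) :
  Ncount o (x ++ [p]) = (Ncount o x + if site_eq_dec p o then 1 else 0)%nat.
Proof. unfold Ncount. now rewrite count_occ_app. Qed.

Lemma Ncount_replace_nth (o b : site) (x : config) (i : nat) : (i < length x)%nat ->
  (Ncount o (replace_nth x i b) + (if site_eq_dec (nth i x nil) o then 1 else 0) =
   Ncount o x + if site_eq_dec b o then 1 else 0)%nat.
Proof.
  revert i; induction x as [|a x IH]; intros i Hi; simpl in Hi; [lia|].
  destruct i as [|i]; cbn [replace_nth nth]; rewrite !Ncount_cons; [lia|].
  specialize (IH i ltac:(lia)). lia.
Qed.

Lemma sumR_map_Ncount (o : site) (g : site -> R) (A B : R) (x : config) :
  sumR (map (fun p => if site_eq_dec p o then A else g p * B) x) =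
  sumR (map g x) * B + INR (Ncount o x) * (A - g o * B).
Proof.
  induction x as [|a x IH]; cbn [map fold_right]; [unfold Ncount; simpl; lra|].
  rewrite IH, Ncount_cons, plus_INR.
  destruct (site_eq_dec a o) as [->|e]; simpl; lra.
Qed.

Definition particle_moves (d : nat) (xi : site -> R) (x : config) (i : nat) :
    list (R * config) :=
  let p := nth i x nil in
  (xi p, x ++ [p]) ::
  flat_map (fun k => [(1, replace_nth x i (addk p k 1%Z));
                      (1, replace_nth x i (addk p k (-1)%Z))]) (seq 0 d).

Lemma moves_particle_moves (d : nat) (xi : site -> R) (x : config) :
  moves d xi x = flat_map (particle_moves d xi x) (seq 0 (length x)).
Proof. reflexivity. Qed.

Lemma moves_rate_nonneg (d : nat) (xi : site -> R) (x : config) (rz : R * config) :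
  (forall z, 0 <= xi z) -> In rz (moves d xi x) -> 0 <= fst rz.
Proof.
  intros Hxi Hin. apply in_flat_map in Hin as (i & _ & [<-|Hin]); [apply Hxi|].
  apply in_flat_map in Hin as (k & _ & [<-|[<-|[]]]); simpl; lra.
Qed.

Lemma qrate_eq (d : nat) (xi : site -> R) (x : config) :
  qrate d xi x = sumR (map (fun p => xi p + 2 * INR d) x).
Proof.
  unfold qrate. rewrite moves_particle_moves, sumR_map_flat_map.
  rewrite <- (sumR_map_seq_nth (fun p => xi p + 2 * INR d) nil).
  f_equal. apply map_ext. intros i. simpl.
  rewrite sumR_map_flat_map, (map_ext _ (fun _ => 2)) by (intros; simpl; lra).
  rewrite sumR_map_const, length_seq. lra.
Qed.

Definition bd_generator (lam mu : R) (f : nat -> R) (n : nat) : R :=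
  INR n * (lam * (f (S n) - f n) + mu * (f (pred n) - f n)).

Section GeneratorBound.
Variables (d : nat) (xi : site -> R) (o : site) (f : nat -> R).
Hypothesis f_antitone : forall j k, (j <= k)%nat -> f k <= f j.

(* A jump of a particle sitting at [o] lowers the count by at most one; any
   other move can only raise it, which does not increase [f]. *)
Lemma particle_moves_le (x : config) (i : nat) : (i < length x)%nat ->
  sumR (map (fun rz => fst rz * f (Ncount o (snd rz))) (particle_moves d xi x i)) <=
  if site_eq_dec (nth i x nil) o
  then xi o * f (S (Ncount o x)) + 2 * INR d * f (pred (Ncount o x))
  else (xi (nth i x nil) + 2 * INR d) * f (Ncount o x).
Proof.
  intros Hi. set (p := nth i x nil). set (n := Ncount o x).
  set (f_jump := if site_eq_dec p o then f (pred n) else f n).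
  assert (Hjump : forall b, f (Ncount o (replace_nth x i b)) <= f_jump).
  { intros b. pose proof (Ncount_replace_nth o b x i Hi) as Hc. fold p n in Hc.
    unfold f_jump. destruct (site_eq_dec p o), (site_eq_dec b o); apply f_antitone; lia. }
  unfold particle_moves. fold p. cbn [map fold_right fst snd].
  rewrite sumR_map_flat_map, Ncount_snoc. fold n.
  assert (Hsum : sumR (map (fun k => sumR (map (fun rz => fst rz * f (Ncount o (snd rz)))
      [(1, replace_nth x i (addk p k 1%Z)); (1, replace_nth x i (addk p k (-1)%Z))]))
      (seq 0 d)) <= INR d * (2 * f_jump)).
  { rewrite <- (length_seq d 0) at 2. rewrite <- sumR_map_const.
    apply sumR_map_le. intros k _. simpl.
    pose proof (Hjump (addk p k 1%Z)). pose proof (Hjump (addk p k (-1)%Z)). lra. }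
  unfold f_jump in Hsum. destruct (site_eq_dec p o) as [<-|].
  - rewrite Nat.add_1_r. lra.
  - rewrite Nat.add_0_r. lra.
Qed.

Lemma moves_generator_le (x : config) :
  sumR (map (fun rz => fst rz * f (Ncount o (snd rz))) (moves d xi x)) <=
  qrate d xi x * f (Ncount o x) + bd_generator (xi o) (2 * INR d) f (Ncount o x).
Proof.
  set (n := Ncount o x).
  set (A := xi o * f (S n) + 2 * INR d * f (pred n)).
  set (g := fun p => if site_eq_dec p o then A else (xi p + 2 * INR d) * f n).
  rewrite moves_particle_moves, sumR_map_flat_map.
  eapply Rle_trans.
  { apply (sumR_map_le _ (fun i => g (nth i x nil))).
    intros i Hi. apply in_seq in Hi.
    eapply Rle_trans; [apply particle_moves_le; lia|].
    unfold g, A, n. destruct (site_eq_dec _ o); lra. }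
  rewrite (sumR_map_seq_nth g). unfold g.
  rewrite (sumR_map_Ncount o (fun p => xi p + 2 * INR d)), qrate_eq.
  unfold bd_generator, A. fold n. lra.
Qed.

End GeneratorBound.

(** * The linear birth-death process *)

Section BirthDeath.
Variables lam mu s : R.

(* Kendall's formula: [bd_pgf t] is the generating function E_1[s^Z_t] of the
   linear birth-death process Z (birth rate [lam], death rate [mu]) started
   from one individual, and [bd_pgf_ds t] is its derivative in [s]. *)
Definition bd_decay (t : R) : R := exp (- (lam - mu) * t).
Definition bd_den (t : R) : R := lam * (1 - s) - bd_decay t * (mu - lam * s).
Definition bd_pgf (t : R) : R := (mu * (1 - s) - bd_decay t * (mu - lam * s)) / bd_den t.
Definition bd_pgf_ds (t : R) : R := (lam - mu) ^ 2 * bd_decay t / bd_den t ^ 2.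

Lemma is_derive_bd_pgf (t : R) : bd_den t <> 0 ->
  is_derive bd_pgf t ((lam * bd_pgf t - mu) * (bd_pgf t - 1)).
Proof.
  unfold bd_pgf, bd_den, bd_decay. intros Hden.
  auto_derive; [exact Hden|field; exact Hden].
Qed.

Lemma is_derive_bd_pgf_ds (t : R) : bd_den t <> 0 ->
  is_derive bd_pgf_ds t (bd_pgf_ds t * (2 * lam * bd_pgf t - lam - mu)).
Proof.
  unfold bd_pgf_ds, bd_pgf, bd_den, bd_decay. intros Hden. auto_derive.
  - intros H. apply Hden. unfold Rminus. nra.
  - field. exact Hden.
Qed.

Variables c K : R.

(* [K * E_n[s^Z_t (1 + c Z_t)]]: the pgf from [n] individuals is [bd_pgf t ^ n]
   and [c s d/ds] of it is the second term, so [bd_test] solves the backward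
   equation of the birth-death process. *)
Definition bd_test (t : R) (n : nat) : R :=
  K * (bd_pgf t ^ n + c * s * INR n * (bd_pgf t ^ pred n * bd_pgf_ds t)).

Lemma is_derive_bd_test (t : R) (n : nat) : bd_den t <> 0 ->
  is_derive (fun t => bd_test t n) t (bd_generator lam mu (bd_test t) n).
Proof.
  intros Hden.
  pose proof (is_derive_bd_pgf t Hden) as Hp.
  pose proof (is_derive_pow _ n _ _ Hp) as Hpn.
  pose proof (is_derive_pow _ (pred n) _ _ Hp) as Hpn'.
  pose proof (is_derive_mult _ _ _ _ _ Hpn' (is_derive_bd_pgf_ds t Hden) Rmult_comm) as Hpr.
  pose proof (is_derive_scal _ _ K _ (is_derive_plus _ _ _ _ _ Hpn
                (is_derive_scal _ _ (c * s * INR n) _ Hpr))) as HW.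
  match type of HW with is_derive _ _ ?L =>
    replace (bd_generator lam mu (bd_test t) n) with L; [exact HW|] end.
  unfold bd_generator, bd_test. unfold plus, mult, scal; simpl. unfold mult; simpl.
  set (p := bd_pgf t). set (r := bd_pgf_ds t).
  destruct n as [|[|j]]; cbn [Init.Nat.pred pow]; rewrite ?S_INR; simpl; ring.
Qed.

Hypothesis rates : 0 < mu < lam.
Hypothesis s_range : 0 <= s < 1.

Lemma bd_decay_range (t : R) : 0 <= t -> 0 < bd_decay t <= 1.
Proof.
  intros Ht. unfold bd_decay. split; [apply exp_pos|].
  assert (Hinv : exp (- (lam - mu) * t) * exp ((lam - mu) * t) = 1).
  { rewrite <- exp_plus, <- exp_0. f_equal. ring. }
  assert (0 <= (lam - mu) * t) by (apply Rmult_le_pos; lra).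
  pose proof (exp_ineq1_le ((lam - mu) * t)). pose proof (exp_pos (- (lam - mu) * t)). nra.
Qed.

Lemma bd_den_pos (t : R) : 0 <= t -> 0 < bd_den t.
Proof.
  intros Ht. pose proof (bd_decay_range t Ht). unfold bd_den.
  destruct (Rle_dec (mu - lam * s) 0); nra.
Qed.

Hypothesis c_nonneg : 0 <= c.
Hypothesis s_c_le1 : s * (1 + c) <= 1.

(* The last bound is what makes [bd_test t] antitone in [n]. *)
Lemma bd_pgf_bounds (t : R) : 0 <= t ->
  0 <= bd_pgf t <= 1 /\ 0 <= bd_pgf_ds t /\ c * s * bd_pgf_ds t <= 1 - bd_pgf t.
Proof.
  intros Ht.
  pose proof (bd_den_pos t Ht) as HD. pose proof (bd_decay_range t Ht) as HE.
  unfold bd_pgf, bd_pgf_ds. unfold bd_den in *.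
  set (E := bd_decay t) in *. set (D := lam * (1 - s) - E * (mu - lam * s)) in *.
  assert (Hnum : 0 <= mu * (1 - s) - E * (mu - lam * s)).
  { destruct (Rle_dec (mu - lam * s) 0); nra. }
  assert (Hcompl : 1 - (mu * (1 - s) - E * (mu - lam * s)) / D = (lam - mu) * (1 - s) / D).
  { field_simplify_eq; [unfold D; ring | lra]. }
  assert (Hgap : 1 - (mu * (1 - s) - E * (mu - lam * s)) / D - c * s * ((lam - mu) ^ 2 * E / D ^ 2)
               = (lam - mu) * ((1 - s) * D - c * s * (lam - mu) * E) / D ^ 2).
  { field_simplify_eq; [unfold D; ring | lra]. }
  assert (Hgap_nonneg : 0 <= (1 - s) * D - c * s * (lam - mu) * E).
  { assert (c * s * (lam - mu) * E <= (1 - s) * (lam - mu) * E).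
    { apply Rmult_le_compat_r; [lra|]. apply Rmult_le_compat_r; lra. }
    assert ((1 - s) * D - (1 - s) * (lam - mu) * E = (1 - s) ^ 2 * lam * (1 - E))
      by (unfold D; ring).
    assert (0 <= (1 - s) ^ 2 * lam * (1 - E)).
    { apply Rmult_le_pos; [apply Rmult_le_pos; [apply pow2_ge_0|]|]; lra. }
    lra. }
  assert (HD2 : 0 < D ^ 2) by (apply pow_lt; lra).
  split; [split|split].
  - apply Rdiv_le_0_compat; lra.
  - assert (0 <= (lam - mu) * (1 - s) / D) by (apply Rdiv_le_0_compat; nra). lra.
  - apply Rdiv_le_0_compat; [apply Rmult_le_pos; [apply pow2_ge_0|]|]; lra.
  - assert (0 <= (lam - mu) * ((1 - s) * D - c * s * (lam - mu) * E) / D ^ 2)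
      by (apply Rdiv_le_0_compat; nra).
    lra.
Qed.

Hypothesis K_nonneg : 0 <= K.

Lemma bd_test_nonneg (t : R) (n : nat) : 0 <= t -> 0 <= bd_test t n.
Proof.
  intros Ht. destruct (bd_pgf_bounds t Ht) as ([Hp0 _] & Hr & _).
  unfold bd_test. apply Rmult_le_pos; [exact K_nonneg|].
  pose proof (pos_INR n). pose proof (pow_le _ n Hp0). pose proof (pow_le _ (pred n) Hp0).
  apply Rplus_le_le_0_compat; [lra|].
  apply Rmult_le_pos; [repeat apply Rmult_le_pos; lra | apply Rmult_le_pos; assumption].
Qed.

Lemma bd_test_antitone (t : R) : 0 <= t ->
  forall j k, (j <= k)%nat -> bd_test t k <= bd_test t j.
Proof.
  intros Ht. destruct (bd_pgf_bounds t Ht) as ([Hp0 Hp1] & Hr & Hcr).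
  assert (Hstep : forall n, bd_test t (S n) <= bd_test t n).
  { intros n. unfold bd_test. set (p := bd_pgf t) in *. set (r := bd_pgf_ds t) in *.
    apply Rmult_le_compat_l; [exact K_nonneg|].
    assert (Hb : 0 <= c * s * r) by (apply Rmult_le_pos; [apply Rmult_le_pos|]; lra).
    destruct n as [|j]; [simpl; lra|].
    cbn [Init.Nat.pred pow]. rewrite !S_INR.
    pose proof (pos_INR j). pose proof (pow_le p j Hp0).
    assert (Hneg : p * p - p + c * s * r * ((INR j + 1 + 1) * p - (INR j + 1)) <= 0).
    { assert (c * s * r * ((INR j + 1 + 1) * p - (INR j + 1)) <= c * s * r * p)
        by (apply Rmult_le_compat_l; nra).
      nra. }
    pose proof (Rmult_le_compat_l (p ^ j) _ 0 ltac:(lra) Hneg). nra. }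
  intros j k Hjk. induction Hjk as [|k _ IH]; [lra|].
  eapply Rle_trans; [apply Hstep|exact IH].
Qed.

Lemma bd_test_0 (n : nat) : bd_test 0 n = K * s ^ n * (1 + c * INR n).
Proof.
  unfold bd_test, bd_pgf, bd_pgf_ds, bd_den, bd_decay.
  rewrite Rmult_0_r, exp_0.
  replace ((mu * (1 - s) - 1 * (mu - lam * s)) / (lam * (1 - s) - 1 * (mu - lam * s))) with s
    by (field; lra).
  replace ((lam - mu) ^ 2 * 1 / (lam * (1 - s) - 1 * (mu - lam * s)) ^ 2) with 1
    by (field; lra).
  destruct n as [|j]; cbn [Init.Nat.pred pow]; simpl; ring.
Qed.

End BirthDeath.

(** * Comparison with the first-jump expansion *)

Lemma continuous_exp_scale (q v : R) : continuous (fun u => exp (q * u)) v.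
Proof.
  apply continuous_exp_comp, (continuous_mult (fun _ => q) (fun u => u)).
  - apply continuous_const.
  - apply continuous_id.
Qed.

Lemma continuous_reflect (f : R -> R) (t v : R) :
  continuous f (t - v) -> continuous (fun u => f (t - u)) v.
Proof.
  intros Hf. apply (continuous_comp (fun u => t - u) f); [|exact Hf].
  apply (continuous_minus (fun _ => t) (fun u => u)); [apply continuous_const|apply continuous_id].
Qed.

(* The integrand is the derivative of [u |-> - exp (- q u) f (t - u)]. *)
Lemma is_RInt_exp_duhamel (q t : R) (f f' : R -> R) : 0 <= t ->
  (forall v, 0 <= v <= t -> is_derive f v (f' v)) ->
  (forall v, 0 <= v <= t -> continuous f' v) ->
  is_RInt (fun u => exp (- q * u) * (q * f (t - u) + f' (t - u))) 0 t
    (f t - exp (- q * t) * f 0).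
Proof.
  intros Ht Hf Hf'.
  set (F := fun u => - (exp (- q * u) * f (t - u))).
  assert (HF : forall u, Rmin 0 t <= u <= Rmax 0 t ->
    is_derive F u (exp (- q * u) * (q * f (t - u) + f' (t - u)))).
  { intros u Hu. rewrite Rmin_left, Rmax_right in Hu by lra.
    assert (Hshift : is_derive (fun u => t - u) u (-1)) by (auto_derive; [auto|ring]).
    assert (Hexp : is_derive (fun u => exp (- q * u)) u (- q * exp (- q * u)))
      by (auto_derive; [auto|ring]).
    pose proof (is_derive_comp f _ u _ _ (Hf (t - u) ltac:(lra)) Hshift) as Hfu.
    pose proof (is_derive_opp _ _ _ (is_derive_mult _ _ _ _ _ Hexp Hfu Rmult_comm)) as HFu.
    match type of HFu with is_derive _ _ ?L =>
      replace (exp (- q * u) * (q * f (t - u) + f' (t - u))) with L; [exact HFu|] end.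
    unfold opp, plus, mult, scal; simpl. unfold mult; simpl. ring. }
  replace (f t - exp (- q * t) * f 0) with (minus (F t) (F 0)).
  - apply (is_RInt_derive F _ 0 t HF).
    intros u Hu. rewrite Rmin_left, Rmax_right in Hu by lra.
    apply (continuous_mult (fun u => exp (- q * u))); [apply continuous_exp_scale|].
    apply (continuous_plus (fun u => q * f (t - u))).
    + apply (continuous_mult (fun _ => q)); [apply continuous_const|].
      apply continuous_reflect, (@ex_derive_continuous R_AbsRing R_NormedModule).
      eexists. apply Hf. lra.
    + apply (continuous_reflect f'), Hf'. lra.
  - unfold F, minus, plus, opp; simpl.
    rewrite Rminus_0_r, Rmult_0_r, exp_0, Rminus_diag. ring.
Qed.

Lemma RInt_exp_conv (q t : R) (H : R -> R) : (forall v, continuous H v) ->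
  RInt (fun u => exp (- q * u) * H (t - u)) 0 t =
  exp (- q * t) * RInt (fun v => exp (q * v) * H v) 0 t.
Proof.
  intros HH.
  set (h := fun v => exp (q * v) * H v).
  assert (Hh : forall a b, ex_RInt h a b).
  { intros a b. apply (@ex_RInt_continuous R_CompleteNormedModule). intros v _.
    apply (continuous_mult (fun v => exp (q * v))); [apply continuous_exp_scale|apply HH]. }
  set (g := fun v : R => (scal (- exp (- q * t)) (h v) : R)).
  assert (Hg : forall a b, ex_RInt g a b)
    by (intros a b; exact (@ex_RInt_scal R_NormedModule h a b _ (Hh a b))).
  transitivity (RInt (fun y => scal (-1) (g (-1 * y + t))) 0 t).
  { apply RInt_ext. intros y _. unfold g, h, scal; simpl. unfold mult; simpl.
    replace (-1 * y + t) with (t - y) by ring.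
    replace (- q * y) with (- q * t + q * (t - y)) by ring. rewrite exp_plus. ring. }
  rewrite (RInt_comp_lin g) by apply Hg.
  replace (-1 * 0 + t) with t by ring. replace (-1 * t + t) with 0 by ring.
  rewrite <- (opp_RInt_swap g) by apply Hg.
  unfold g. rewrite (@RInt_scal R_CompleteNormedModule h 0 t _ (Hh 0 t)).
  unfold opp, scal; simpl. unfold mult; simpl. ring.
Qed.

Lemma continuous_RInt_exp_conv (q t : R) (H : R -> R) : (forall v, continuous H v) ->
  continuous (fun t => RInt (fun u => exp (- q * u) * H (t - u)) 0 t) t.
Proof.
  intros HH.
  set (g := fun v => exp (q * v) * H v).
  assert (Hg : forall v, continuous g v).
  { intros v. apply (continuous_mult (fun v => exp (q * v))).
    - apply continuous_exp_scale.
    - apply HH. }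
  apply (continuous_ext (fun t => exp (- q * t) * RInt g 0 t)).
  { intros t'. symmetry. now apply RInt_exp_conv. }
  apply (continuous_mult (fun t => exp (- q * t))); [apply continuous_exp_scale|].
  apply (@ex_derive_continuous R_AbsRing R_NormedModule). exists (g t).
  apply (is_derive_RInt g (fun b => RInt g 0 b) 0 t); [|apply Hg].
  apply filter_forall. intros b. apply (@RInt_correct R_CompleteNormedModule).
  apply (@ex_RInt_continuous R_CompleteNormedModule). intros; apply Hg.
Qed.

(* [sum_Sn] with [Rplus] in place of the abstract monoid [plus], so that it rewrites. *)
Lemma sum_n_S (a : nat -> R) (N : nat) : sum_n a (S N) = sum_n a N + a (S N).
Proof. exact (sum_Sn a N). Qed.

Lemma continuous_bd_generator (lam mu : R) (f : R -> nat -> R) (n : nat) (t : R) :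
  (forall k, continuous (fun t => f t k) t) ->
  continuous (fun t => bd_generator lam mu (f t) n) t.
Proof.
  intros Hf. unfold bd_generator.
  apply (continuous_mult (fun _ => INR n)); [apply continuous_const|].
  apply (continuous_plus (fun t => lam * (f t (S n) - f t n))
                         (fun t => mu * (f t (pred n) - f t n))).
  - apply (continuous_mult (fun _ => lam)); [apply continuous_const|].
    apply (continuous_minus (fun t => f t (S n))); apply Hf.
  - apply (continuous_mult (fun _ => mu)); [apply continuous_const|].
    apply (continuous_minus (fun t => f t (pred n))); apply Hf.
Qed.

Section Comparison.
Variables (d : nat) (xi : site -> R) (E : config -> bool).
Hypothesis xi_nonneg : forall z, 0 <= xi z.

Definition jump_rate_sum (P : R -> config -> R) (v : R) (x : config) : R :=
  sumR (map (fun rz => fst rz * P v (snd rz)) (moves d xi x)).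

Definition jump_int (P : R -> config -> R) (t : R) (x : config) : R :=
  RInt (fun u => exp (- qrate d xi x * u) * jump_rate_sum P (t - u) x) 0 t.

Lemma jprob_S (m : nat) (t : R) (x : config) :
  jprob d xi E (S m) t x = jump_int (jprob d xi E m) t x.
Proof. reflexivity. Qed.

Lemma continuous_jump_rate_sum (P : R -> config -> R) (x : config) (v : R) :
  (forall z, continuous (fun v => P v z) v) -> continuous (fun v => jump_rate_sum P v x) v.
Proof.
  intros HP. apply (continuous_sumR_map (fun rz v => fst rz * P v (snd rz))).
  intros rz _. apply (continuous_mult (fun _ => fst rz)); [apply continuous_const|apply HP].
Qed.

Lemma ex_RInt_jump_integrand (P : R -> config -> R) (t : R) (x : config) : 0 <= t ->
  (forall z v, 0 <= v <= t -> continuous (fun v => P v z) v) ->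
  ex_RInt (fun u => exp (- qrate d xi x * u) * jump_rate_sum P (t - u) x) 0 t.
Proof.
  intros Ht HP. apply (@ex_RInt_continuous R_CompleteNormedModule). intros u Hu.
  rewrite Rmin_left, Rmax_right in Hu by lra.
  apply (continuous_mult (fun u => exp (- qrate d xi x * u))); [apply continuous_exp_scale|].
  apply (continuous_reflect (fun v => jump_rate_sum P v x)), continuous_jump_rate_sum.
  intros z. apply HP. lra.
Qed.

Lemma continuous_jump_int (P : R -> config -> R) (x : config) (t : R) :
  (forall z v, continuous (fun v => P v z) v) -> continuous (fun t => jump_int P t x) t.
Proof.
  intros HP. apply (continuous_RInt_exp_conv _ _ (fun v => jump_rate_sum P v x)).
  intros v. apply continuous_jump_rate_sum. intros z. apply HP.
Qed.

Lemma continuous_jprob (m : nat) (x : config) (t : R) :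
  continuous (fun t => jprob d xi E m t x) t.
Proof.
  revert x t. induction m as [|m IH]; intros x t.
  - simpl. destruct (E x); [apply continuous_exp_scale|apply continuous_const].
  - apply continuous_jump_int. intros z v. apply IH.
Qed.

Lemma jump_int_plus (P Q : R -> config -> R) (t : R) (x : config) : 0 <= t ->
  (forall z v, continuous (fun v => P v z) v) -> (forall z v, continuous (fun v => Q v z) v) ->
  jump_int (fun v z => P v z + Q v z) t x = jump_int P t x + jump_int Q t x.
Proof.
  intros Ht HP HQ. unfold jump_int.
  rewrite <- (@RInt_plus R_CompleteNormedModule);
    [|apply ex_RInt_jump_integrand; auto..].
  apply RInt_ext. intros u _. unfold jump_rate_sum, plus; simpl.
  rewrite <- Rmult_plus_distr_l, <- sumR_map_plus. do 2 f_equal.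
  apply map_ext. intros rz. ring.
Qed.

Lemma jump_int_ext (P Q : R -> config -> R) (t : R) (x : config) :
  (forall v z, P v z = Q v z) -> jump_int P t x = jump_int Q t x.
Proof.
  intros HPQ. apply RInt_ext. intros u _. unfold jump_rate_sum.
  now rewrite (map_ext _ (fun rz => fst rz * Q (t - u) (snd rz))) by (intros; now rewrite HPQ).
Qed.

Lemma jump_int_zero (t : R) (x : config) : jump_int (fun _ _ => 0) t x = 0.
Proof.
  unfold jump_int. rewrite (RInt_ext _ (fun _ => 0)), RInt_const; [apply Rmult_0_r|].
  intros u _. unfold jump_rate_sum.
  rewrite (map_ext _ (fun _ => 0)) by (intros; apply Rmult_0_r).
  rewrite sumR_map_const, !Rmult_0_r. reflexivity.
Qed.

Definition jprob_sum (N : nat) (t : R) (x : config) : R :=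
  sum_n (fun n => jprob d xi E n t x) N.

Lemma continuous_jprob_sum (N : nat) (x : config) (t : R) :
  continuous (fun t => jprob_sum N t x) t.
Proof.
  unfold jprob_sum. induction N as [|N IH].
  - apply (continuous_ext (fun t => jprob d xi E 0 t x)); [intros; now rewrite sum_O|].
    apply continuous_jprob.
  - apply (continuous_ext (fun t => jprob_sum N t x + jprob d xi E (S N) t x));
      [intros; now rewrite sum_n_S|].
    apply (continuous_plus (fun t => jprob_sum N t x)); [apply IH|apply continuous_jprob].
Qed.

Lemma jprob_sum_S (N : nat) (t : R) (x : config) : 0 <= t ->
  jprob_sum (S N) t x = jprob d xi E 0 t x + jump_int (jprob_sum N) t x.
Proof.
  intros Ht. revert x. induction N as [|N IH]; intros x.
  - unfold jprob_sum. rewrite sum_n_S, sum_O, jprob_S. f_equal.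
    apply jump_int_ext. intros v z. now rewrite sum_O.
  - unfold jprob_sum at 1. rewrite sum_n_S. fold (jprob_sum (S N) t x).
    rewrite IH, jprob_S, Rplus_assoc, <- jump_int_plus; auto.
    + f_equal. apply jump_int_ext. intros v z. unfold jprob_sum. now rewrite sum_n_S.
    + intros z v. apply continuous_jprob_sum.
    + intros z v. apply continuous_jprob.
Qed.

Variables (o : site) (w : R -> nat -> R).
Hypothesis w_nonneg : forall t n, 0 <= t -> 0 <= w t n.
Hypothesis w_antitone : forall t j k, 0 <= t -> (j <= k)%nat -> w t k <= w t j.
Hypothesis w_backward : forall t n, 0 <= t ->
  is_derive (fun t => w t n) t (bd_generator (xi o) (2 * INR d) (w t) n).
Hypothesis w_init : forall x, (if E x then 1 else 0) <= w 0 (Ncount o x).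

Lemma continuous_w (n : nat) (t : R) : 0 <= t -> continuous (fun t => w t n) t.
Proof.
  intros Ht. apply (@ex_derive_continuous R_AbsRing R_NormedModule).
  eexists. now apply w_backward.
Qed.

(* [w] dominates the first-jump decomposition of any [P] below it: compare the
   BRW moves with the birth-death generator, then integrate the backward equation. *)
Lemma first_jump_le (P : R -> config -> R) (t : R) (x : config) : 0 <= t ->
  (forall z v, continuous (fun v => P v z) v) ->
  (forall v z, 0 <= v <= t -> P v z <= w v (Ncount o z)) ->
  jprob d xi E 0 t x + jump_int P t x <= w t (Ncount o x).
Proof.
  intros Ht HPc HPw.
  set (q := qrate d xi x). set (n := Ncount o x).
  set (gen := fun v => bd_generator (xi o) (2 * INR d) (w v) n).
  set (W := fun v z => w v (Ncount o z)).
  assert (HWc : forall z v, 0 <= v <= t -> continuous (fun v => W v z) v).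
  { intros z v Hv. apply continuous_w. lra. }
  assert (Hduhamel : is_RInt (fun u => exp (- q * u) * (q * w (t - u) n + gen (t - u))) 0 t
                       (w t n - exp (- q * t) * w 0 n)).
  { apply (is_RInt_exp_duhamel q t (fun v => w v n) gen); [exact Ht| |].
    - intros v Hv. apply w_backward. lra.
    - intros v Hv. apply continuous_bd_generator. intros k. apply continuous_w. lra. }
  assert (HPW : jump_int P t x <= jump_int W t x).
  { apply RInt_le; [lra|apply ex_RInt_jump_integrand; auto..|].
    intros u Hu. apply Rmult_le_compat_l; [left; apply exp_pos|].
    apply sumR_map_le. intros rz Hrz.
    apply Rmult_le_compat_l; [eapply moves_rate_nonneg; eauto|]. apply HPw. lra. }
  assert (HWgen : jump_int W t x <= w t n - exp (- q * t) * w 0 n).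
  { rewrite <- (is_RInt_unique _ _ _ _ Hduhamel).
    apply RInt_le; [lra|apply ex_RInt_jump_integrand; auto|eexists; exact Hduhamel|].
    intros u Hu. apply Rmult_le_compat_l; [left; apply exp_pos|].
    apply (moves_generator_le d xi o (w (t - u))). intros j k. apply w_antitone. lra. }
  assert (Hinit : jprob d xi E 0 t x <= exp (- q * t) * w 0 n).
  { pose proof (w_init x) as Hx. change (Ncount o x) with n in Hx.
    pose proof (exp_pos (- q * t)). pose proof (w_nonneg 0 n (Rle_refl 0)).
    simpl. fold q. destruct (E x); nra. }
  lra.
Qed.

Lemma jprob_sum_le (N : nat) (t : R) (x : config) : 0 <= t ->
  jprob_sum N t x <= w t (Ncount o x).
Proof.
  revert t x. induction N as [|N IH]; intros t x Ht.
  - unfold jprob_sum. rewrite sum_O.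
    rewrite <- (Rplus_0_r (jprob _ _ _ _ _ _)), <- (jump_int_zero t x).
    apply first_jump_le; [exact Ht|intros; apply continuous_const|].
    intros v z Hv. apply w_nonneg. lra.
  - rewrite jprob_sum_S by exact Ht. apply first_jump_le; [exact Ht| |].
    + intros z v. apply continuous_jprob_sum.
    + intros v z Hv. apply IH. lra.
Qed.

Lemma brw_prob_le_supersolution (t : R) : 0 <= t ->
  brw_prob d xi E t <= w t (Ncount o [origin d]).
Proof.
  intros Ht. set (B := w t (Ncount o [origin d])).
  assert (HL : Rbar_le (Lim_seq (fun N => jprob_sum N t [origin d])) B).
  { rewrite <- (Lim_seq_const B). apply Lim_seq_le_loc. exists O. intros N _.
    now apply jprob_sum_le. }
  unfold brw_prob, Series. fold (jprob_sum).
  destruct (Lim_seq _); simpl in *; [exact HL|contradiction|apply w_nonneg, Ht].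
Qed.

End Comparison.

Lemma brw_prob_le_bd_test (d : nat) (xi : site -> R) (E : config -> bool) (s c K T : R) :
  (forall z, 0 <= xi z) -> 0 < 2 * INR d < xi (origin d) ->
  0 <= s < 1 -> 0 <= c -> s * (1 + c) <= 1 -> 0 <= K -> 0 <= T ->
  (forall x, (if E x then 1 else 0) <=
             K * s ^ Ncount (origin d) x * (1 + c * INR (Ncount (origin d) x))) ->
  brw_prob d xi E T <= bd_test (xi (origin d)) (2 * INR d) s c K T 1.
Proof.
  intros Hxi Hrates Hs Hc Hsc HK HT Hinit.
  replace 1%nat with (Ncount (origin d) [origin d])
    by (unfold Ncount; simpl; now destruct (list_eq_dec Z.eq_dec (origin d) (origin d))).
  apply brw_prob_le_supersolution; [exact Hxi| | | | |exact HT].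
  - intros t n Ht. now apply bd_test_nonneg.
  - intros t j k Ht. now apply bd_test_antitone.
  - intros t n Ht. apply is_derive_bd_test, Rgt_not_eq, bd_den_pos; auto.
  - intros x. now rewrite bd_test_0.
Qed.

(** * Choice of the test function *)

Lemma exp_le_affine (x : R) : 0 <= x <= 1 / 2 -> exp x <= 2 / 3 * exp (1 / 2) * (1 + x).
Proof.
  intros Hx.
  (* with y = 1/2 - x: exp x = exp (1/2) / exp y <= exp (1/2) / (1 + y) <= exp (1/2) (1 - 2y/3) *)
  assert (Hsplit : exp (1 / 2) = exp x * exp (1 / 2 - x)) by (rewrite <- exp_plus; f_equal; ring).
  pose proof (exp_ineq1_le (1 / 2 - x)). pose proof (exp_pos x).
  assert (Hle : exp x * (1 + (1 / 2 - x)) <= exp (1 / 2)) by nra.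
  assert (0 <= exp x * (x * (1 / 2 - x))) by (apply Rmult_le_pos; [lra|nra]).
  apply (Rmult_le_compat_l (2 / 3 * (1 + x))) in Hle; [|lra].
  nra.
Qed.

Lemma exp_pow (x : R) (n : nat) : exp x ^ n = exp (INR n * x).
Proof.
  induction n as [|n IH]; [simpl; now rewrite Rmult_0_l, exp_0|].
  rewrite S_INR, Rmult_plus_distr_r, Rmult_1_l, exp_plus, <- IH. simpl. ring.
Qed.

Lemma exp_half_le : exp (1 / 2) <= (20 / 19) ^ 10.
Proof.
  assert (Hsmall : exp (1 / 20) <= 20 / 19).
  { pose proof (exp_ineq1_le (- (1 / 20))) as H.
    assert (Hinv : exp (1 / 20) * exp (- (1 / 20)) = 1)
      by (rewrite <- exp_plus, <- exp_0; f_equal; ring).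
    pose proof (exp_pos (1 / 20)). nra. }
  replace (1 / 2) with (INR 10 * (1 / 20)) by (simpl; lra). rewrite <- exp_pow.
  apply pow_incr. split; [left; apply exp_pos|exact Hsmall].
Qed.

(* Numerator and denominator of [bd_test] at [(s, c) = (m/(m+1), 1/m)], [n = 1]. *)
Definition extinction_num (lam mu m : R) : R :=
  (lam * m - mu) * ((2 * lam - mu) * m - mu) + (lam - mu) ^ 2 * m * (m + 1).
Definition extinction_den (lam mu m : R) : R := ((2 * lam - mu) * m - mu) ^ 2.

Lemma extinction_den_pos (lam mu m : R) : 0 < mu -> 2 * mu <= lam -> 1 <= m ->
  0 < extinction_den lam mu m.
Proof. intros. apply pow_lt. nra. Qed.

Lemma extinction_ratio_le_15_16 (lam mu m : R) : 0 < mu -> 2 * mu <= lam -> 2 <= m ->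
  extinction_num lam mu m <= 15 / 16 * extinction_den lam mu m.
Proof.
  intros Hmu Hlam Hm. unfold extinction_num, extinction_den.
  set (v := lam - 2 * mu). set (u := m - 2).
  replace lam with (2 * mu + v) by (unfold v; ring). replace m with (2 + u) by (unfold u; ring).
  assert (0 <= v) by (unfold v; lra). assert (0 <= u) by (unfold u; lra).
  (* this is 16 (15/16 den - num), a polynomial in mu, u, v with nonnegative coefficients *)
  assert (0 <= 16 * v^2 + 32 * v^2 * u + 12 * v^2 * u^2 + 56 * mu * v + 100 * mu * v * u
              + 36 * mu * v * u^2 + 39 * mu^2 + 66 * mu^2 * u + 23 * mu^2 * u^2).
  { repeat apply Rplus_le_le_0_compat; repeat apply Rmult_le_pos; try lra; apply pow_le; lra. }
  nra.
Qed.

Lemma extinction_ratio_le_21_25 (lam mu m : R) : 0 < mu -> 2 * mu <= lam -> 4 <= m ->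
  extinction_num lam mu m <= 21 / 25 * extinction_den lam mu m.
Proof.
  intros Hmu Hlam Hm. unfold extinction_num, extinction_den.
  set (v := lam - 2 * mu). set (u := m - 4).
  replace lam with (2 * mu + v) by (unfold v; ring). replace m with (4 + u) by (unfold u; ring).
  assert (0 <= v) by (unfold v; lra). assert (0 <= u) by (unfold u; lra).
  (* this is 25 (21/25 den - num) *)
  assert (0 <= 44 * v^2 + 47 * v^2 * u + 9 * v^2 * u^2 + 196 * mu * v + 157 * mu * v * u
              + 27 * mu * v * u^2 + 116 * mu^2 + 86 * mu^2 * u + 14 * mu^2 * u^2).
  { repeat apply Rplus_le_le_0_compat; repeat apply Rmult_le_pos; try lra; apply pow_le; lra. }
  nra.
Qed.

Lemma low_count_indicator_le (m : R) (n : nat) : 0 < m -> INR n <= m / 2 ->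
  1 <= 2 / 3 * exp (1 / 2) * (m / (m + 1)) ^ n * (1 + / m * INR n).
Proof.
  intros Hm Hn.
  assert (Hx : 0 <= INR n * / m <= 1 / 2).
  { pose proof (pos_INR n). pose proof (Rinv_0_lt_compat m Hm).
    split; [apply Rmult_le_pos; lra|].
    apply (Rmult_le_reg_l m); [lra|]. rewrite (Rmult_comm (INR n)), <- Rmult_assoc, Rinv_r; lra. }
  assert (Hgrowth : (1 + / m) ^ n <= 2 / 3 * exp (1 / 2) * (1 + / m * INR n)).
  { pose proof (Rinv_0_lt_compat m Hm).
    eapply Rle_trans; [apply pow_incr; split; [lra|apply exp_ineq1_le]|].
    rewrite exp_pow, (Rmult_comm (/ m)). now apply exp_le_affine. }
  assert (Hcancel : (m / (m + 1)) ^ n * (1 + / m) ^ n = 1).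
  { rewrite <- Rpow_mult_distr. replace (m / (m + 1) * (1 + / m)) with 1 by (field; lra).
    apply pow1. }
  assert (0 <= (m / (m + 1)) ^ n) by (apply pow_le, Rdiv_le_0_compat; lra).
  apply (Rmult_le_compat_l ((m / (m + 1)) ^ n)) in Hgrowth; [|assumption].
  nra.
Qed.

Lemma Rltb_indicator_le (x a b : R) :
  0 <= b -> (x < a -> 1 <= b) -> (if Rltb x a then 1 else 0) <= b.
Proof. intros Hb Hlt. unfold Rltb. destruct (Rlt_dec x a); [apply Hlt|]; lra. Qed.

Lemma test_weight_nonneg (K s c : R) (n : nat) :
  0 <= K -> 0 <= s -> 0 <= c -> 0 <= K * s ^ n * (1 + c * INR n).
Proof.
  intros HK Hs Hc. pose proof (pos_INR n). pose proof (pow_le s n Hs).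
  apply Rmult_le_pos; [apply Rmult_le_pos; lra|]. nra.
Qed.

Lemma tilted_params_range (m : R) : 1 <= m ->
  0 <= m / (m + 1) < 1 /\ 0 <= / m /\ m / (m + 1) * (1 + / m) = 1.
Proof.
  intros Hm. pose proof (Rinv_0_lt_compat m ltac:(lra)).
  split; [split|split]; [apply Rdiv_le_0_compat; lra| |lra|field; lra].
  apply (Rmult_lt_reg_r (m + 1)); [lra|]. unfold Rdiv. rewrite Rmult_assoc, Rinv_l; lra.
Qed.

Section Regimes.
Variables lam mu T : R.
Hypothesis mu_pos : 0 < mu.
Hypothesis lam_ge : 2 * mu <= lam.
Hypothesis T_nonneg : 0 <= T.

Let m := exp ((lam - mu) * T).

Lemma growth_ge_1 : 1 <= m.
Proof.
  pose proof (exp_ineq1_le ((lam - mu) * T)).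
  assert (0 <= (lam - mu) * T) by (apply Rmult_le_pos; lra). unfold m. lra.
Qed.

Lemma bd_decay_eq : bd_decay lam mu T = / m.
Proof. unfold bd_decay, m. rewrite <- exp_Ropp. f_equal. ring. Qed.

Lemma bd_test_extinction_le : bd_test lam mu 0 0 1 T 1 <= 1 / 2.
Proof.
  pose proof growth_ge_1 as Hm. pose proof (Rinv_0_lt_compat m ltac:(lra)) as Hm'.
  assert (Hinv : / m <= 1) by (rewrite <- Rinv_1; apply Rinv_le_contravar; lra).
  assert (Hp : bd_pgf lam mu 0 T <= 1 / 2).
  { unfold bd_pgf, bd_den. rewrite bd_decay_eq. apply Rle_div_l; nra. }
  unfold bd_test. simpl. lra.
Qed.

Lemma bd_test_one_eq (K : R) :
  bd_test lam mu (m / (m + 1)) (/ m) K T 1 =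
  K * (extinction_num lam mu m / extinction_den lam mu m).
Proof.
  pose proof growth_ge_1 as Hm.
  pose proof (extinction_den_pos lam mu m mu_pos lam_ge Hm) as HD.
  unfold bd_test, bd_pgf, bd_pgf_ds, bd_den, extinction_num, extinction_den in *.
  rewrite bd_decay_eq. simpl.
  assert (0 < (2 * lam - mu) * m - mu) by nra.
  field. repeat split; nra.
Qed.

Lemma bd_test_one_le_mid : 2 <= m -> bd_test lam mu (m / (m + 1)) (/ m) 1 T 1 <= 15 / 16.
Proof.
  intros Hm2. rewrite bd_test_one_eq, Rmult_1_l.
  apply Rle_div_l; [apply extinction_den_pos; lra|]. apply extinction_ratio_le_15_16; lra.
Qed.

Lemma bd_test_one_le_large :
  4 <= m -> bd_test lam mu (m / (m + 1)) (/ m) (2 / 3 * exp (1 / 2)) T 1 <= 15 / 16.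
Proof.
  intros Hm4. rewrite bd_test_one_eq.
  assert (Hratio : extinction_num lam mu m / extinction_den lam mu m <= 21 / 25).
  { apply Rle_div_l; [apply extinction_den_pos; lra|]. apply extinction_ratio_le_21_25; lra. }
  assert (0 <= extinction_num lam mu m / extinction_den lam mu m).
  { apply Rdiv_le_0_compat; [|apply extinction_den_pos; lra].
    unfold extinction_num. pose proof (pow2_ge_0 (lam - mu)).
    apply Rplus_le_le_0_compat;
      [apply Rmult_le_pos|apply Rmult_le_pos; [apply Rmult_le_pos|]]; nra. }
  pose proof exp_half_le. pose proof (exp_pos (1 / 2)).
  assert ((20 / 19) ^ 10 <= 16709 / 10000) by (simpl; lra).
  nra.
Qed.

Lemma low_count_test_function :
  exists s c K : R, 0 <= s < 1 /\ 0 <= c /\ s * (1 + c) <= 1 /\ 0 <= K /\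
    (forall n, (if Rltb (INR n) (/ 2 * m) then 1 else 0) <= K * s ^ n * (1 + c * INR n)) /\
    bd_test lam mu s c K T 1 <= 15 / 16.
Proof.
  pose proof growth_ge_1 as Hm.
  destruct (tilted_params_range m Hm) as (Hs & Hc & Hsc).
  destruct (Rle_dec m 2) as [Hm2|Hm2]; [|destruct (Rle_dec m 4) as [Hm4|Hm4]].
  - exists 0, 0, 1. do 4 (split; [lra|]).
    split; [|pose proof bd_test_extinction_le; lra].
    intros n. apply Rltb_indicator_le; [apply test_weight_nonneg; lra|].
    intros Hn. destruct n as [|n]; [simpl; lra|].
    rewrite S_INR in Hn. pose proof (pos_INR n). lra.
  - exists (m / (m + 1)), (/ m), 1. do 4 (split; [lra|]).
    split; [|apply bd_test_one_le_mid; lra].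
    intros n. apply Rltb_indicator_le; [apply test_weight_nonneg; lra|].
    intros Hn. destruct n as [|[|n]]; [simpl; lra|simpl; lra|].
    rewrite !S_INR in Hn. pose proof (pos_INR n). lra.
  - exists (m / (m + 1)), (/ m), (2 / 3 * exp (1 / 2)).
    pose proof (exp_pos (1 / 2)). do 4 (split; [lra|]).
    split; [|apply bd_test_one_le_large; lra].
    intros n. apply Rltb_indicator_le; [apply test_weight_nonneg; lra|].
    intros Hn. apply low_count_indicator_le; lra.
Qed.

End Regimes.

Theorem lemma2p2 (d : nat) (Hd : (1 <= d)%nat) (xi : site -> R)
  (Hxi : forall z, 0 <= xi z) (H0 : xi (origin d) >= 4 * INR d)
  (t : R) (Ht : 0 <= t) :
  brw_prob d xi
    (fun x => Rltb (INR (Ncount (origin d) x))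
                   (/ 2 * exp ((xi (origin d) - 2 * INR d) * t))) t
  <= 15 / 16.
Proof.
  assert (Hd1 : 1 <= INR d) by (apply (le_INR 1 d) in Hd; simpl in Hd; lra).
  destruct (low_count_test_function (xi (origin d)) (2 * INR d) t ltac:(lra) ltac:(lra) Ht)
    as (s & c & K & Hs & Hc & Hsc & HK & Hinit & Hend).
  eapply Rle_trans; [|exact Hend].
  apply brw_prob_le_bd_test; auto. lra.
Qed.
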